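(* Let $\mu\in\mathcal{M}^+(\mathbb{R}^d)$ be compactly supported and let $V$ be a measure vector field satisfying (V1). Then for $N$ sufficiently large, $$\|\mu-\mathcal{A}_N^x(\mu)\|_{BL^*}\le\sqrt d\,\Delta_N^2\|\mu\|_{BL^*},\qquad \|V[\mu]-\mathcal{A}_N^v(V[\mu])\|_{BL^*}\le 2\sqrt d\,\Delta_N\|\mu\|_{BL^*}.$$
   Context: A measure vector field is a map $V:\mathcal{M}^+(\mathbb{R}^d)\to\mathcal{M}^+(\mathbb{R}^d\times\mathbb{R}^d)$ ($\mathcal{M}^+$: finite nonnegative Borel measures) with $\pi_1^{\#}V[\mu]=\mu$, $\pi_1(x,v)=x$; (V1): there is $C_S>0$ with $\sup_{(x,v)\in\operatorname{supp}V[\mu]}|v|\le C_S(1+\sup_{(x,v)\in\operatorname{supp}V[\mu]}|x|)$. $\|f\|_{BL}=\max(\sup|f|,\operatorname{Lip}(f))$, $\|\mu\|_{BL^*}=\sup\{\int\psi\,d\mu:\|\psi\|_{BL}\le1\}$ (on $\mathbb{R}^d$ or $\mathbb{R}^{2d}$). For $N\in\mathbb{N}$ let $\Delta_N=1/N$; let $x_1,\dots,x_I$ enumerate $(N^{-2}\mathbb{Z}^d)\cap[-N,N]^d$ and $v_1,\dots,v_J$ enumerate $(N^{-1}\mathbb{Z}^d)\cap[-N,N]^d$; set $Q_i=x_i+[0,\Delta_N^2)^d$, $Q'_j=v_j+[0,\Delta_N)^d$. Define $\mathcal{A}_N^x(\mu)=\sum_{i=1}^I\mu(Q_i)\delta_{x_i}$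 and, for $W\in\mathcal{M}^+(\mathbb{R}^d\times\mathbb{R}^d)$, $\mathcal{A}_N^v(W)=\sum_{i=1}^I\sum_{j=1}^J W(Q_i\times Q'_j)\delta_{(x_i,v_j)}$. *)

From HB Require Import structures.
From mathcomp Require Import all_boot all_order all_algebra.
From mathcomp Require Import all_classical all_reals all_analysis.
Set Implicit Arguments. Unset Strict Implicit. Unset Printing Implicit Defensive.
Import Order.TTheory GRing.Theory Num.Theory.
Import numFieldNormedType.Exports.
Local Open Scope classical_set_scope.
Local Open Scope ring_scope.

HB.instance Definition _ (T1 T2 : ptopologicalType) := Pointed.on (T1 * T2)%type.

Notation Rd R d := (g_sigma_algebraType (@open 'rV[R]_d)).
Notation Rd2 R d := (g_sigma_algebraType (@open ('rV[R]_d * 'rV[R]_d)%type)).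

Section defs.
Variable R : realType.

Definition enorm d (x : 'rV[R]_d) : R := Num.sqrt (\sum_(j < d) x 0 j ^+ 2).
Definition enorm2 d (p : 'rV[R]_d * 'rV[R]_d) : R :=
  Num.sqrt (\sum_(j < d) p.1 0 j ^+ 2 + \sum_(j < d) p.2 0 j ^+ 2).

Definition msupp (T : ptopologicalType)
  (mu : set (g_sigma_algebraType (@open T)) -> \bar R) : set T :=
  [set x : T | forall U : set T, open U -> U x -> (0 < mu U)%E].

(* ||f||_BL <= 1 w.r.t. the metric dist: sup|f| <= 1 and Lip(f) <= 1 *)
Definition BL1 (T : Type) (dist : T -> T -> R) (f : T -> R) : Prop :=
  (forall x, `|f x| <= 1) /\ (forall x y, `|f x - f y| <= dist x y).

Definition eucl_dist d (x y : 'rV[R]_d) : R := enorm (x - y).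
Definition eucl_dist2 d (p q : 'rV[R]_d * 'rV[R]_d) : R :=
  enorm2 (p.1 - q.1, p.2 - q.2).

Definition bl_norm (T : ptopologicalType) (dist : T -> T -> R)
  (mu : {measure set (g_sigma_algebraType (@open T)) -> \bar R}) : \bar R :=
  ereal_sup [set (\int[mu]_x (f x)%:E)%E | f in BL1 dist].

Definition bl_dist (T : ptopologicalType) (dist : T -> T -> R)
  (mu nu : {measure set (g_sigma_algebraType (@open T)) -> \bar R}) : \bar R :=
  ereal_sup [set (\int[mu]_x (f x)%:E - \int[nu]_x (f x)%:E)%E | f in BL1 dist].

(* finite weighted sum of Dirac masses  \sum_i w_i delta_{p_i}  *)
Definition dmeasure dd (G : measurableType dd) (I : finType) (p : I -> G)
  (w : I -> {nonneg R}) : {measure set G -> \bar R} :=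
  msum (fun k => nth (mzero : {measure set G -> \bar R})
    [seq (mscale (w i) (\d_(p i)) : {measure set G -> \bar R}) | i <- enum I] k)
    #|I|.

Definition nng_meas dd (G : measurableType dd) (mu : {measure set G -> \bar R})
  (A : set G) : {nonneg R} := NngNum (fine_ge0 (measure_ge0 mu A)).

Definition Delta (N : nat) : R := (N%:R)^-1.

(* Grid (N^-2 Z^d) cap [-N,N]^d, indexed by k : 'I_d -> [0, 2 N^3]:        *)
Definition gridX_idx (d N : nat) := {ffun 'I_d -> 'I_(2 * N ^ 3).+1}.
Definition gridX d N (k : gridX_idx d N) : 'rV[R]_d :=
  \row_j (((k j)%:R - (N ^ 3)%:R) / (N ^ 2)%:R).
(* Grid (N^-1 Z^d) cap [-N,N]^d, indexed by m : 'I_d -> [0, 2 N^2]:        *)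
Definition gridV_idx (d N : nat) := {ffun 'I_d -> 'I_(2 * N ^ 2).+1}.
Definition gridV d N (m : gridV_idx d N) : 'rV[R]_d :=
  \row_j (((m j)%:R - (N ^ 2)%:R) / N%:R).

Definition cubeQ d N (k : gridX_idx d N) : set 'rV[R]_d :=
  [set x | forall j, gridX k 0 j <= x 0 j < gridX k 0 j + Delta N ^+ 2].
Definition cubeQ' d N (m : gridV_idx d N) : set 'rV[R]_d :=
  [set v | forall j, gridV m 0 j <= v 0 j < gridV m 0 j + Delta N].

Definition AX d N (mu : {measure set (Rd R d) -> \bar R}) :
  {measure set (Rd R d) -> \bar R} :=
  @dmeasure _ (Rd R d) (gridX_idx d N) (fun k => gridX k)
    (fun k => nng_meas mu (cubeQ k)).

Definition AV d N (W : {measure set (Rd2 R d) -> \bar R}) :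
  {measure set (Rd2 R d) -> \bar R} :=
  @dmeasure _ (Rd2 R d) (gridX_idx d N * gridV_idx d N)%type
    (fun km => (gridX km.1, gridV km.2))
    (fun km => nng_meas W (cubeQ km.1 `*` cubeQ' km.2)).

Definition measure_vector_field d
  (V : {finite_measure set (Rd R d) -> \bar R} ->
       {finite_measure set (Rd2 R d) -> \bar R}) : Prop :=
  forall (mu : {finite_measure set (Rd R d) -> \bar R}) (A : set (Rd R d)),
    measurable A -> V mu (fst @^-1` A) = mu A.

Definition V1 d
  (V : {finite_measure set (Rd R d) -> \bar R} ->
       {finite_measure set (Rd2 R d) -> \bar R}) : Prop :=
  exists CS : R, 0 < CS /\
  forall mu : {finite_measure set (Rd R d) -> \bar R},
    (ereal_sup [set (enorm p.2)%:E | p in @msupp ('rV[R]_d * 'rV[R]_d)%type (V mu)]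
     <= CS%:E * (1 + ereal_sup [set (enorm p.1)%:E | p in @msupp ('rV[R]_d * 'rV[R]_d)%type (V mu)]))%E.

End defs.

From HB Require Import structures.
From mathcomp Require Import all_boot all_order all_algebra.
From mathcomp Require Import all_classical all_reals all_analysis.
From mathcomp Require Import measurable_realfun lra.
Import Order.TTheory GRing.Theory Num.Theory.
Import numFieldNormedType.Exports.
Local Open Scope classical_set_scope.
Local Open Scope ring_scope.

(* On each grid cell Q, a function f with ||f||_BL <= 1 stays within the
   diameter c of Q of its value at the grid point x_Q.  Since mu has bounded
   support, and hence by (V1) so has V[mu], for N large the cells cover all but a
   closed set avoiding the support; such a set is null, being a countable union of
   compact sets each covered by finitely many null open sets.  Hence
   int f dmu - sum_Q mu(Q) f(x_Q) <= c * sum_Q mu(Q) <= c * mu(R^d) <= c ||mu||_BL*,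
   the last step by testing against f = 1.  The diameters are sqrt d Delta_N^2 for
   Q_i and sqrt d (Delta_N^2 + Delta_N) <= 2 sqrt d Delta_N for Q_i x Q'_j. *)

Section finite_sums.
Context {R : realType} {dd : measure_display} {G : measurableType dd}.
Local Open Scope ereal_scope.

Lemma integral_dmeasure (I : finType) (p : I -> G) (w : I -> {nonneg R})
    (g : G -> \bar R) : measurable_fun setT g -> (forall x, 0 <= g x) ->
  \int[dmeasure p w]_x g x = \sum_(i : I) ((w i)%:num)%:E * g (p i).
Proof.
move=> mg g0; rewrite /dmeasure ge0_integral_measure_sum //.
set s := [seq _ | i <- enum I].
have -> : \sum_(k < #|I|) \int[nth (mzero : {measure set G -> \bar R}) s k]_x g x
    = \sum_(m <- s) \int[m]_x g x.
  by rewrite [RHS](big_nth (mzero : {measure set G -> \bar R})) size_map -cardE big_mkord.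
rewrite big_map big_enum /=; apply: eq_bigr => i _.
by rewrite ge0_integral_mscale // integral_dirac // diracT mul1e.
Qed.

Lemma dmeasure_setT (I : finType) (p : I -> G) (w : I -> {nonneg R}) :
  dmeasure p w setT = (\sum_(i : I) (w i)%:num)%:E.
Proof.
rewrite -[LHS]mul1e -(integral_cst _ measurableT) integral_dmeasure //.
by rewrite -sumEFin; apply: eq_bigr => i _; rewrite mule1.
Qed.

Lemma finite_mass_integrable_cst (mu : {measure set G -> \bar R}) (k : R) :
  mu setT < +oo -> mu.-integrable setT (EFin \o cst k).
Proof.
move=> mufin; apply/integrableP; split; first exact/measurable_EFinP.
rewrite (eq_integral (cst `|k|%:E)) // integral_cst //.
by rewrite lte_mul_pinfty // lee_fin.
Qed.

Lemma integral_norm_le1_shift (mu : {measure set G -> \bar R}) (f : G -> R) :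
  mu setT < +oo -> measurable_fun setT f -> (forall x, `|f x| <= 1)%R ->
  \int[mu]_x (f x)%:E = \int[mu]_x (f x + 1)%:E - mu setT.
Proof.
move=> mufin mf f1.
have mf1 : measurable_fun setT (fun x => f x + 1)%R.
  by apply: measurable_funD => //; exact: measurable_cst.
have i1 : mu.-integrable setT (EFin \o (fun x => f x + 1)%R).
  apply: (le_integrable _ _ _ (finite_mass_integrable_cst mu 2%R mufin)) => //.
    exact/measurable_EFinP.
  move=> x _ /=; rewrite lee_fin (ger0_norm (ler0n _ 2)).
  by apply: le_trans (ler_normD _ _) _; rewrite normr1 lerD2r.
transitivity (\int[mu]_x ((f x + 1)%:E - (cst 1%R x)%:E)).
  by apply: eq_integral => x _; rewrite /= -EFinB addrK.
rewrite integralB_EFin //; last exact: finite_mass_integrable_cst.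
congr (_ - _); rewrite (eq_integral (cst 1%:E)) //.
by rewrite integral_cst // mul1e.
Qed.

Context {mu : {measure set G -> \bar R}} {I : finType} {Q : I -> set G}.
Hypothesis mQ : forall i, measurable (Q i).

Lemma integral_sum_indic (b : I -> R) : (forall i, 0 <= b i)%R ->
  \int[mu]_x (\sum_i b i * \1_(Q i) x)%R%:E = \sum_i (b i)%:E * mu (Q i).
Proof.
move=> b0; rewrite (eq_integral (fun x => \sum_i (b i * \1_(Q i) x)%R%:E)); last first.
  by move=> x _; rewrite sumEFin.
rewrite ge0_integral_sum //.
- apply: eq_bigr => i _; under eq_integral do rewrite EFinM.
  rewrite ge0_integralZl_EFin //; first by rewrite integral_indic // setIT.
  exact/measurable_EFinP/measurable_indic.
- by move=> i; apply/measurable_EFinP/measurable_funM => //; exact: measurable_indic.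
- by move=> i x _; rewrite lee_fin mulr_ge0 // indicE ler0n.
Qed.

Lemma sum_measure_trivIset_le : trivIset setT Q -> \sum_i mu (Q i) <= mu setT.
Proof.
move=> tQ.
have -> : \sum_i mu (Q i) = \int[mu]_x (\sum_i 1 * \1_(Q i) x)%R%:E.
  by rewrite integral_sum_indic //; apply: eq_bigr => i _; rewrite mul1e.
rewrite -[leRHS]mul1e -integral_cst //; apply: ge0_le_integral => //.
- by move=> x _; rewrite lee_fin sumr_ge0 // => i _; rewrite mul1r indicE ler0n.
- apply/measurable_EFinP/measurable_sum => i.
  by apply: measurable_funM => //; exact: measurable_indic.
- move=> x _; rewrite lee_fin.
  have [[i Qix]|nQ] := pselect (exists i, Q i x); last first.
    by rewrite big1 // => i _; rewrite indicE memNset ?mulr0 // => Qix; apply: nQ; exists i.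
  rewrite (bigD1 i) //= indicE mem_set // mulr1 big1 ?addr0 // => j ji.
  rewrite indicE memNset ?mulr0 // => Qjx; move/eqP: ji; apply.
  by apply: tQ => //; exists x.
Qed.

Lemma integral_sum_indic_null {F : set G} {b : I -> R} {K : R} :
    measurable F -> mu F = 0 -> (forall i, 0 <= b i)%R -> (0 <= K)%R ->
  \int[mu]_x ((\sum_i b i * \1_(Q i) x) + K * \1_F x)%R%:E
    = \sum_i (b i)%:E * mu (Q i).
Proof.
move=> mF muF b0 K0; have indic0 (A : set G) x : (0 <= \1_A x :> R)%R by rewrite indicE ler0n.
rewrite (eq_integral (fun x => (\sum_i b i * \1_(Q i) x)%R%:E + (K * \1_F x)%R%:E));
  last by move=> x _; rewrite EFinD.
rewrite ge0_integralD //.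
- rewrite integral_sum_indic // (eq_integral (fun x => K%:E * (\1_F x)%:E)); last first.
    by move=> x _; rewrite EFinM.
  rewrite ge0_integralZl_EFin // ?integral_indic ?setIT ?muF ?mule0 ?adde0 //.
  exact/measurable_EFinP/measurable_indic.
- by move=> x _; rewrite lee_fin sumr_ge0 // => i _; rewrite mulr_ge0.
- apply/measurable_EFinP/measurable_sum => i.
  by apply: measurable_funM => //; exact: measurable_indic.
- by move=> x _; rewrite lee_fin mulr_ge0.
- by apply/measurable_EFinP/measurable_funM => //; exact: measurable_indic.
Qed.

Lemma integral_le_cells {F : set G} {g : G -> R} {b : I -> R} (K : R) :
    measurable F -> mu F = 0 -> (forall x, F x \/ exists i, Q i x) ->
    measurable_fun setT g -> (forall x, 0 <= g x <= K)%R ->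
    (forall i, 0 <= b i)%R -> (forall i x, Q i x -> g x <= b i)%R ->
  \int[mu]_x (g x)%:E <= \sum_i (b i)%:E * mu (Q i).
Proof.
move=> mF muF cover mg g0K b0 gb.
have K0 : (0 <= K)%R by have /andP[g0 gK] := g0K point; exact: le_trans gK.
have indic0 (A : set G) x : (0 <= \1_A x :> R)%R by rewrite indicE ler0n.
have step0 x : (0 <= \sum_i b i * \1_(Q i) x)%R.
  by apply: sumr_ge0 => i _; rewrite mulr_ge0.
rewrite -(integral_sum_indic_null mF muF b0 K0); apply: ge0_le_integral => //.
- by move=> x _; rewrite lee_fin; case/andP: (g0K x).
- exact/measurable_EFinP.
- apply/measurable_EFinP/measurable_funD.
    apply: measurable_sum => i; apply: measurable_funM => //; exact: measurable_indic.
  by apply: measurable_funM => //; exact: measurable_indic.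
- move=> x _; rewrite lee_fin; have /andP[_ gK] := g0K x.
  case: (cover x) => [Fx | [i Qix]].
    by rewrite indicE mem_set // mulr1 (le_trans gK) // lerDr.
  rewrite (bigD1 i) //= indicE mem_set // mulr1 -addrA.
  by rewrite (le_trans (gb i x Qix)) // lerDl addr_ge0 ?mulr_ge0 ?sumr_ge0 // => j _;
    rewrite mulr_ge0.
Qed.

End finite_sums.

Lemma integral_sub_dmeasure_cells_le {R : realType} {dd : measure_display}
    {G : measurableType dd} (nu : {finite_measure set G -> \bar R}) {I : finType}
    {p : I -> G} {Q : I -> set G} (F : set G) (f : G -> R) {c : R} :
    measurable F -> nu F = 0 ->
    (forall i, measurable (Q i)) -> trivIset setT Q ->
    (forall x, F x \/ exists i, Q i x) -> 0 <= c ->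
    measurable_fun setT f -> (forall x, `|f x| <= 1) ->
    (forall i x, Q i x -> f x <= f (p i) + c) ->
  (\int[nu]_x (f x)%:E - \int[dmeasure p (fun i => nng_meas nu (Q i))]_x (f x)%:E
    <= c%:E * nu setT)%E.
Proof.
move=> mF nuF mQ tQ cover c0 mf f1 fQ.
set A := dmeasure _ _; pose a i := fine (nu (Q i)).
have nuQ i : nu (Q i) = (a i)%:E by rewrite fineK // fin_num_measure.
have [m nuT] : exists m, (nu : {measure set G -> \bar R}) setT = m%:E.
  by exists (fine (nu setT)); rewrite fineK // fin_num_measure.
have AT : A setT = (\sum_i a i)%:E by rewrite dmeasure_setT.
have sum_a : \sum_i a i <= m.
  rewrite -lee_fin -nuT -sumEFin; under eq_bigr do rewrite -nuQ.
  exact: sum_measure_trivIset_le.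
(* Working with f + 1 >= 0 keeps all integrals among nonnegative functions. *)
have f1ge0 x : 0 <= f x + 1 by move: (f1 x); rewrite ler_norml; lra.
have mf1 : measurable_fun setT (fun x => (f x + 1)%:E).
  by apply/measurable_EFinP/measurable_funD => //; exact: measurable_cst.
have intA : (\int[A]_x (f x + 1)%:E = (\sum_i a i * (f (p i) + 1))%:E)%E.
  by rewrite integral_dmeasure // -sumEFin; apply: eq_bigr => i _; rewrite EFinM.
have intnu : (\int[nu]_x (f x + 1)%:E <= (\sum_i (f (p i) + 1 + c) * a i)%:E)%E.
  rewrite -sumEFin; under eq_bigr do rewrite EFinM -nuQ.
  apply: (integral_le_cells mQ 2 mF nuF cover) => //.
  - by apply: measurable_funD => //; exact: measurable_cst.
  - by move=> x; rewrite f1ge0 /=; move: (f1 x); rewrite ler_norml; lra.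
  - by move=> i; rewrite addr_ge0.
  - by move=> i x /fQ; lra.
have [J intJ] : exists J, (\int[nu]_x (f x + 1)%:E = J%:E)%E.
  exists (fine (\int[nu]_x (f x + 1)%:E)); rewrite fineK // ge0_fin_numE.
    exact: le_lt_trans intnu (ltry _).
  by apply: integral_ge0 => x _; rewrite lee_fin.
rewrite (integral_norm_le1_shift nu) ?nuT ?ltry //.
rewrite (integral_norm_le1_shift A) ?AT ?ltry // intA intJ.
move: intnu; rewrite intJ -!EFinB !lee_fin.
have -> : \sum_i (f (p i) + 1 + c) * a i = \sum_i a i * (f (p i) + 1) + c * \sum_i a i.
  rewrite mulr_sumr -big_split; apply: eq_bigr => i _ /=.
  by rewrite mulrDl [X in X + _]mulrC.
by have := ler_wpM2l c0 sum_a; lra.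
Qed.

Section borel.
Context {R : realType} {T : ptopologicalType}.
Local Notation M := (g_sigma_algebraType (@open T)).
Local Open Scope ereal_scope.

Lemma measurable_open (A : set T) : open A -> measurable (A : set M).
Proof. exact: sub_sigma_algebra. Qed.

Lemma measurable_closed (A : set T) : closed A -> measurable (A : set M).
Proof.
move=> cA; rewrite -[A]setCK; apply: measurableC.
by apply: measurable_open; exact: closed_openC.
Qed.

Lemma continuous_measurable_borel (f : T -> R) :
  continuous f -> measurable_fun setT (f : M -> R).
Proof.
move=> cf; apply: (measurability _ (RGenOpens.measurableE R)).
move=> _ [_ [a [b ->]] <-]; rewrite setTI; apply: measurable_open.
by move/continuousP : cf; apply; exact: interval_open.
Qed.

Lemma measurable_box n (phi : 'I_n -> T -> R) (a b : 'I_n -> R) :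
    (forall j, continuous (phi j)) ->
  measurable ([set x | forall j, (a j <= phi j x < b j)%R] : set M).
Proof.
move=> cphi.
have -> : [set x | forall j, (a j <= phi j x < b j)%R] =
    \bigcap_(j in [set: 'I_n]) (phi j @^-1` [set y | a j <= y]%R `&`
                                phi j @^-1` [set y | y < b j]%R).
  apply/seteqP; split => x /= H j.
    by move=> _; have /andP[] := H j.
  by have [] := H j I => *; apply/andP.
apply: fin_bigcap_measurable => // j _; apply: measurableI.
  apply: measurable_closed; apply: preimage_closed; last exact: closed_ge.
  by move=> x _; exact: cphi.
by apply: measurable_open; move/continuousP : (cphi j); apply; exact: open_lt.
Qed.

Lemma compact_outside_msupp_negligible (mu : {measure set M -> \bar R}) (C : set T) :
  compact C -> (forall x, C x -> ~ msupp mu x) -> mu.-negligible (C : set M).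
Proof.
rewrite compact_cover => cC Cns.
pose D := [set U : set T | open U /\ mu U = 0].
have cov : C `<=` cover D id.
  move=> x Cx; apply: contrapT => H; apply: (Cns x Cx) => U oU Ux.
  rewrite lt0e measure_ge0 andbT; apply/eqP => muU0.
  by apply: H; exists U.
have [D' sD' Ccov] := cC (set T) D id (fun U DU => DU.1) cov.
apply: (@negligibleS _ _ _ mu (\big[setU/set0]_(U <- finmap.enum_fset D') U : set M)).
  by move=> x /Ccov [U /= UD' Ux]; rewrite -bigcup_fset; exists U.
rewrite big_seq; elim/big_ind: _ => [|A B|U /sD' /set_mem [oU muU]].
- exact: negligible_set0.
- exact: negligibleU.
- by apply/negligibleP => //; exact: measurable_open.
Qed.

Lemma closed_outside_msupp_null (mu : {measure set M -> \bar R}) (F : set T)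
    (K : nat -> set T) :
  closed F -> (forall n, compact (K n)) -> (forall x, exists n, K n x) ->
  (forall x, F x -> ~ msupp mu x) -> mu (F : set M) = 0.
Proof.
move=> cF cK Kcov Fns; apply/negligibleP; first exact: measurable_closed.
apply: (@negligibleS _ _ _ mu (\bigcup_n (K n `&` F) : set M)).
  by move=> x Fx; have [n Kn] := Kcov x; exists n.
apply: negligible_bigcup => n; apply: compact_outside_msupp_negligible.
  exact: compact_closedI.
by move=> x [_ Fx]; exact: Fns.
Qed.

Lemma measure_setT_le_bl_norm (dist : T -> T -> R) (mu : {measure set M -> \bar R}) :
  (forall x y, 0 <= dist x y)%R -> mu setT <= bl_norm dist mu.
Proof.
move=> dist0; apply: ereal_sup_ubound; exists (fun _ => 1%R).
  by split => [x | x y]; rewrite ?normr1 ?subrr ?normr0.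
by rewrite (eq_integral (cst 1%:E)) // integral_cst // mul1e.
Qed.

Lemma bl_dist_cells_le (nu : {finite_measure set M -> \bar R}) (dist : T -> T -> R)
    {I : finType} {p : I -> T} {Q : I -> set T} (F : set T) {c : R} :
    (forall f, BL1 dist f -> continuous f) ->
    measurable (F : set M) -> nu F = 0 ->
    (forall i, measurable (Q i : set M)) -> trivIset setT Q ->
    (forall x, F x \/ exists i, Q i x) ->
    (0 <= c)%R -> (forall i x, Q i x -> dist x (p i) <= c)%R ->
  bl_dist dist nu (dmeasure (p : I -> M) (fun i => nng_meas nu (Q i)))
    <= c%:E * nu setT.
Proof.
move=> BL1_cont mF nuF mQ tQ cover c0 Qc.
apply: ge_ereal_sup => _ [f BL1f <-]; have [f1 fL] := BL1f.
apply: (integral_sub_dmeasure_cells_le (p := p) nu F f mF nuF mQ tQ cover c0 _ f1).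
  by apply: continuous_measurable_borel; exact: BL1_cont.
move=> i x Qix; have := Qc i x Qix; have := fL x (p i).
by rewrite ler_norml; lra.
Qed.

End borel.

Lemma ler_sqrtr_sqr {R : rcfType} (s t : R) : 0 <= t -> s <= t ^+ 2 -> Num.sqrt s <= t.
Proof.
by move=> t0 st; rewrite -[t]ger0_norm // -sqrtr_sqr ler_sqrt // sqr_ge0.
Qed.

Section euclidean.
Context {R : realType} {d : nat}.
Implicit Types (u v : 'rV[R]_d) (p q : 'rV[R]_d * 'rV[R]_d).

Lemma coord_le_norm v j : `|v 0 j| <= `|v|.
Proof.
have /mapP[k _ ->] : `|v 0 j| \in [seq `|v x.1 x.2| | x : 'I_1 * 'I_d].
  by apply/mapP; exists (0, j) => //=; rewrite mem_enum.
by rewrite [leRHS]/Num.Def.normr /= mx_normrE; apply/bigmax_geP; right; exists k.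
Qed.

Lemma coord_le_enorm v j : `|v 0 j| <= enorm v.
Proof.
rewrite /enorm -sqrtr_sqr ler_sqrt ?sumr_ge0 // => [|i _]; last exact: sqr_ge0.
by rewrite (bigD1 j) //= lerDl sumr_ge0 // => i _; exact: sqr_ge0.
Qed.

Lemma norm_le_enorm v : `|v| <= enorm v.
Proof.
rewrite [leLHS]/Num.Def.normr /= mx_normrE; apply/bigmax_leP.
by split=> [|[i j] _ /=]; [exact: sqrtr_ge0 | rewrite (ord1 i); exact: coord_le_enorm].
Qed.

Lemma enorm_le_coord v e :
  0 <= e -> (forall j, `|v 0 j| <= e) -> enorm v <= Num.sqrt d%:R * e.
Proof.
move=> e0 ve; apply: ler_sqrtr_sqr; first by rewrite mulr_ge0 ?sqrtr_ge0.
rewrite exprMn sqr_sqrtr // -[d in d%:R]card_ord -sumr_const mulr_suml.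
by apply: ler_sum => j _; rewrite mul1r -real_normK ?num_real // lerXn2r ?nnegrE.
Qed.

Lemma enorm_le_norm v : enorm v <= Num.sqrt d%:R * `|v|.
Proof. exact/enorm_le_coord/coord_le_norm. Qed.

Lemma eucl_dist2_le p q : eucl_dist2 p q <= eucl_dist p.1 q.1 + eucl_dist p.2 q.2.
Proof.
rewrite /eucl_dist2 /enorm2 /eucl_dist /enorm /=.
set a := \sum_(j < d) _; set b := \sum_(j < d) _.
have a0 : 0 <= a by apply: sumr_ge0 => j _; exact: sqr_ge0.
have b0 : 0 <= b by apply: sumr_ge0 => j _; exact: sqr_ge0.
apply: ler_sqrtr_sqr; first by rewrite addr_ge0 ?sqrtr_ge0.
rewrite sqrrD !sqr_sqrtr // -addrA lerD2l lerDr.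
by rewrite mulrn_wge0 // mulr_ge0 ?sqrtr_ge0.
Qed.

End euclidean.

Lemma lipschitz_continuous {R : realType} {V : normedModType R} (f : V -> R) (k : R) :
  (forall x y, `|f x - f y| <= k * `|x - y|) -> continuous f.
Proof.
move=> fL x; apply/cvgrPdist_lt => e e0.
have k1 : 0 < e / (`|k| + 1) by rewrite divr_gt0 // ltr_wpDl.
near=> y.
have : `|x - y| < e / (`|k| + 1).
  by near: y; exact: (@cvgr_dist_lt _ _ _ (nbhs x) _ id x (@cvg_id _ (nbhs x)) _ k1).
rewrite ltr_pdivlMr ?ltr_wpDl // => hy.
apply: le_lt_trans (fL x y) _; apply: le_lt_trans (ler_wpM2r (normr_ge0 _) (ler_norm k)) _.
by apply: le_lt_trans hy; rewrite mulrC ler_wpM2l // lerDl.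
Unshelve. all: by end_near.
Qed.

Section euclidean_continuity.
Context {R : realType} {d : nat}.

Lemma BL1_eucl_continuous (f : 'rV[R]_d -> R) : BL1 (@eucl_dist R d) f -> continuous f.
Proof.
move=> [_ fL]; apply: (lipschitz_continuous _ (Num.sqrt d%:R)) => x y.
exact: le_trans (fL x y) (enorm_le_norm _).
Qed.

Lemma BL1_eucl2_continuous (f : 'rV[R]_d * 'rV[R]_d -> R) :
  BL1 (@eucl_dist2 R d) f -> continuous f.
Proof.
move=> [_ fL]; apply: (lipschitz_continuous _ (2 * Num.sqrt d%:R)) => p q.
have n1 : `|p.1 - q.1| <= `|p - q| by rewrite [leRHS]/Num.norm /= le_max lexx.
have n2 : `|p.2 - q.2| <= `|p - q| by rewrite [leRHS]/Num.norm /= le_max lexx orbT.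
apply: le_trans (fL p q) _; apply: le_trans (eucl_dist2_le p q) _.
rewrite mulr2n !mulrDl !mul1r; apply: lerD; apply: le_trans (enorm_le_norm _) _;
  by rewrite ler_wpM2l ?sqrtr_ge0.
Qed.

End euclidean_continuity.

Lemma msupp_fst {R : realType} {T1 T2 : ptopologicalType}
    {W : {measure set (g_sigma_algebraType (@open (T1 * T2)%type)) -> \bar R}}
    {mu : {measure set (g_sigma_algebraType (@open T1)) -> \bar R}} {p : T1 * T2} :
  (forall A, open A -> W (fst @^-1` A) = mu A) -> msupp W p -> msupp mu p.1.
Proof.
move=> Wfst Wp U oU Up1; rewrite -Wfst //; apply: Wp => //.
have fst_cont : continuous (@fst T1 T2) by move=> q; exact: cvg_fst.
by move/continuousP : fst_cont; apply.
Qed.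

Section lattice.
Context {R : realType} {d : nat}.
Variables (s L : nat).
Hypothesis s_gt0 : (0 < s)%N.

Definition lattice_point (k : {ffun 'I_d -> 'I_(2 * L).+1}) : 'rV[R]_d :=
  \row_j (((k j)%:R - L%:R) / s%:R).

Definition lattice_cell (k : {ffun 'I_d -> 'I_(2 * L).+1}) : set 'rV[R]_d :=
  [set x | forall j, lattice_point k 0 j <= x 0 j < lattice_point k 0 j + s%:R^-1].

Let s_pos : 0 < s%:R :> R. Proof. by rewrite ltr0n. Qed.

Lemma lattice_floor (N : nat) (y : R) : L = (N * s)%N -> `|y| < N%:R ->
  exists k : 'I_(2 * L).+1,
    (k%:R - L%:R) / s%:R <= y < (k%:R - L%:R) / s%:R + s%:R^-1.
Proof.
move=> -> /[!ltr_norml] /andP[yl yr].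
set t := (y + N%:R) * s%:R.
have t0 : 0 <= t by rewrite mulr_ge0 ?ltW //; lra.
have /andP[k1 k2] := truncn_itv t0.
have kL : (Num.truncn t < (2 * (N * s)).+1)%N.
  rewrite ltnS -(ler_nat R); apply: le_trans k1 _.
  by rewrite /t !natrM; have := s_pos; nra.
exists (Ordinal kL) => /=.
rewrite -[X in _ < _ + X]mul1r -mulrDl ler_pdivrMr // ltr_pdivlMr //.
move: k1 k2; rewrite /t -natr1 !natrM; set K := (Num.truncn _)%:R => k1 k2.
by apply/andP; split; have := s_pos; nra.
Qed.

Lemma lattice_floor_uniq (k k' : nat) (y : R) :
  (k%:R - L%:R) / s%:R <= y < (k%:R - L%:R) / s%:R + s%:R^-1 ->
  (k'%:R - L%:R) / s%:R <= y < (k'%:R - L%:R) / s%:R + s%:R^-1 -> k = k'.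
Proof.
move=> /andP[h1 h2] /andP[h3 h4].
rewrite -[X in _ < _ + X]mul1r -mulrDl ltr_pdivlMr // in h2.
rewrite -[X in _ < _ + X]mul1r -mulrDl ltr_pdivlMr // in h4.
rewrite ler_pdivrMr // in h1; rewrite ler_pdivrMr // in h3.
have : k%:R < k'%:R + 1 :> R by lra.
have : k'%:R < k%:R + 1 :> R by lra.
rewrite !natr1 !ltr_nat !ltnS => kk' k'k.
by apply/eqP; rewrite eqn_leq kk' k'k.
Qed.

Lemma lattice_cell_cover (N : nat) (x : 'rV[R]_d) : L = (N * s)%N -> `|x| < N%:R ->
  exists k, lattice_cell k x.
Proof.
move=> LNs xN.
have floor_j j := lattice_floor N (x 0 j) LNs (le_lt_trans (coord_le_norm x j) xN).
exists [ffun j => xchoose (floor_j j)] => j.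
by rewrite mxE ffunE; exact: (xchooseP (floor_j j)).
Qed.

Lemma lattice_cell_trivIset : trivIset setT lattice_cell.
Proof.
move=> k k' _ _ [x [kx k'x]]; apply/ffunP => j; apply/val_inj.
by have := k'x j; have := kx j; rewrite !mxE; exact: lattice_floor_uniq.
Qed.

Lemma lattice_cell_dist k x :
  lattice_cell k x -> eucl_dist x (lattice_point k) <= Num.sqrt d%:R * s%:R^-1.
Proof.
move=> kx; apply: enorm_le_coord; first by rewrite invr_ge0 ltW.
move=> j; have /andP[lo hi] := kx j; rewrite !mxE in lo hi *.
by rewrite ger0_norm ?subr_ge0 //; lra.
Qed.

Lemma measurable_lattice_cell_preimage {T : ptopologicalType} {g : T -> 'rV[R]_d} k :
  continuous g -> measurable (g @^-1` lattice_cell k : set (g_sigma_algebraType (@open T))).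
Proof.
move=> cg; apply: (measurable_box _ (fun j x => g x 0 j)) => j.
move=> x; apply: (@continuous_comp _ _ _ g (fun v : 'rV[R]_d => v 0 j)); first exact: cg.
exact: coord_continuous.
Qed.

End lattice.

Section norm_bounded_support.
Context {R : realType} {V : normedModType R}.

Lemma closed_norm_ge (B : R) : closed [set x : V | B <= `|x|].
Proof.
apply: (@preimage_closed _ _ (@Num.norm _ V) [set y | B <= y]); last exact: closed_ge.
by move=> x _; exact: norm_continuous.
Qed.

Lemma closed_norm_le (B : R) : closed [set x : V | `|x| <= B].
Proof.
apply: (@preimage_closed _ _ (@Num.norm _ V) [set y | y <= B]); last exact: closed_le.
by move=> x _; exact: norm_continuous.
Qed.

Lemma msupp_norm_lt_null
    (mu : {measure set (g_sigma_algebraType (@open V)) -> \bar R}) (B : R) :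
    (forall n : nat, compact [set x : V | `|x| <= n%:R]) ->
    (forall x, msupp mu x -> `|x| < B) ->
  mu [set x : V | B <= `|x|] = 0%E.
Proof.
move=> ball_compact suppB; apply: (closed_outside_msupp_null _ _ _ _ ball_compact).
- exact: closed_norm_ge.
- by move=> x; exists (Num.truncn `|x|).+1; exact/ltW/truncnS_gt.
- by move=> x /= Bx /suppB; rewrite ltNge Bx.
Qed.

End norm_bounded_support.

Section euclidean_balls.
Context {R : realType} {d : nat}.

Lemma compact_norm_le_rV (B : R) : compact [set x : 'rV[R]_d | `|x| <= B].
Proof.
apply: bounded_closed_compact; last exact: closed_norm_le.
exists B; split; first exact: num_real.
by move=> M BM x /= xB; apply: le_trans xB (ltW BM).
Qed.

Lemma compact_norm_le_rV2 (B : R) :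
  compact [set p : 'rV[R]_d * 'rV[R]_d | `|p| <= B].
Proof.
have -> : [set p : 'rV[R]_d * 'rV[R]_d | `|p| <= B] =
    [set x : 'rV[R]_d | `|x| <= B] `*` [set x : 'rV[R]_d | `|x| <= B].
  by apply/seteqP; split => p /=; rewrite [`|p|]/Num.norm /= ge_max => /andP.
by apply: compact_setX; exact: compact_norm_le_rV.
Qed.

End euclidean_balls.

Section grid_approximation.
Context {R : realType} {d : nat}.

Lemma Delta_sqr N : Delta R N ^+ 2 = ((N ^ 2)%:R)^-1.
Proof. by rewrite /Delta exprVn natrX. Qed.

Lemma cubeQE N (k : gridX_idx d N) : @cubeQ R d N k = lattice_cell (N ^ 2) (N ^ 3) k.
Proof. by rewrite /cubeQ Delta_sqr. Qed.

Lemma bl_dist_AX_le {mu : {finite_measure set Rd R d -> \bar R}} {N : nat} {B : R} :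
    (0 < N)%N -> B <= N%:R -> mu [set x : 'rV[R]_d | B <= `|x|] = 0%E ->
  (bl_dist (@eucl_dist R d) mu (AX N mu)
    <= (Num.sqrt d%:R * Delta R N ^+ 2)%:E * mu setT)%E.
Proof.
move=> N0 BN muB; have N2 : (0 < N ^ 2)%N by rewrite expn_gt0 N0.
apply: (bl_dist_cells_le _ _ [set x : 'rV[R]_d | B <= `|x|]) => //.
- exact: BL1_eucl_continuous.
- by apply: measurable_closed; exact: closed_norm_ge.
- move=> k; rewrite cubeQE; apply: (@measurable_lattice_cell_preimage R d _ _ _ id).
  by move=> x; exact: cvg_id.
- by move=> k k'; rewrite !cubeQE; exact: lattice_cell_trivIset.
- move=> x; have [|xB] := leP B `|x|; first by left.
  right; have [k kx] := @lattice_cell_cover R d _ _ N2 N x (expnS N 2) (lt_le_trans xB BN).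
  by exists k; rewrite cubeQE.
- by rewrite mulr_ge0 ?sqrtr_ge0 ?sqr_ge0.
- by move=> k x; rewrite cubeQE Delta_sqr; exact: lattice_cell_dist.
Qed.

Lemma cubeQ'E N (m : gridV_idx d N) : @cubeQ' R d N m = lattice_cell N (N ^ 2) m.
Proof. by []. Qed.

Lemma Delta_sqr_le N : (0 < N)%N -> Delta R N ^+ 2 <= Delta R N.
Proof.
move=> N0; have D0 : 0 <= Delta R N by rewrite invr_ge0.
by rewrite expr2 ler_piMr // invf_le1 ?ler1n ?ltr0n.
Qed.

Lemma bl_dist_AV_le {W : {finite_measure set Rd2 R d -> \bar R}} {N : nat} {B : R} :
    (0 < N)%N -> B <= N%:R -> W [set p : 'rV[R]_d * 'rV[R]_d | B <= `|p|] = 0%E ->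
  (bl_dist (@eucl_dist2 R d) W (AV N W)
    <= (2 * Num.sqrt d%:R * Delta R N)%:E * W setT)%E.
Proof.
move=> N0 BN WB; have N2 : (0 < N ^ 2)%N by rewrite expn_gt0 N0.
have fst_cont : continuous (@fst 'rV[R]_d 'rV[R]_d) by move=> p; exact: cvg_fst.
have snd_cont : continuous (@snd 'rV[R]_d 'rV[R]_d) by move=> p; exact: cvg_snd.
apply: (bl_dist_cells_le _ _ [set p : 'rV[R]_d * 'rV[R]_d | B <= `|p|]) => //.
- exact: BL1_eucl2_continuous.
- by apply: measurable_closed; exact: closed_norm_ge.
- move=> [k m]; rewrite /= cubeQE cubeQ'E; apply: measurableI.
    exact: (@measurable_lattice_cell_preimage R d _ _ _ fst).
  exact: (@measurable_lattice_cell_preimage R d _ _ _ snd).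
- move=> [k m] [k' m'] _ _ [p [[/= kp mp] [/= k'p m'p]]].
  rewrite cubeQE in kp; rewrite cubeQE in k'p.
  have -> : k = k' by apply: (@lattice_cell_trivIset R d _ _ N2) => //; exists p.1.
  by have -> : m = m' by apply: (@lattice_cell_trivIset R d _ _ N0) => //; exists p.2.
- move=> p; have [|pB] := leP B `|p|; first by left.
  have := lt_le_trans pB BN; rewrite [`|p|]/Num.norm /= gt_max => /andP[p1N p2N].
  have [k kp] := @lattice_cell_cover R d _ _ N2 N p.1 (expnS N 2) p1N.
  have [m mp] := @lattice_cell_cover R d _ _ N0 N p.2 (erefl _) p2N.
  by right; exists (k, m); split; rewrite /= ?cubeQE ?cubeQ'E.
- by rewrite !mulr_ge0 ?sqrtr_ge0 ?invr_ge0.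
- move=> [k m] p [/= kp mp]; apply: le_trans (eucl_dist2_le _ _) _.
  rewrite cubeQE in kp; rewrite cubeQ'E in mp.
  apply: le_trans (lerD (@lattice_cell_dist R d _ _ N2 _ _ kp) (@lattice_cell_dist R d _ _ N0 _ _ mp)) _.
  rewrite -Delta_sqr mulr2n !mulrDl mul1r lerD2r ler_wpM2l ?sqrtr_ge0 //.
  exact: Delta_sqr_le.
Qed.

End grid_approximation.

Lemma measure_vector_field_msupp_fst {R : realType} {d : nat}
    {V : {finite_measure set Rd R d -> \bar R} -> {finite_measure set Rd2 R d -> \bar R}}
    {mu : {finite_measure set Rd R d -> \bar R}} {p : 'rV[R]_d * 'rV[R]_d} :
  measure_vector_field V -> msupp (V mu) p -> msupp mu p.1.
Proof.
move=> mvf; apply: msupp_fst => A oA.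
by apply: mvf; exact: measurable_open.
Qed.

Lemma V1_msupp_snd_bounded {R : realType} {d : nat}
    {V : {finite_measure set Rd R d -> \bar R} -> {finite_measure set Rd2 R d -> \bar R}}
    {mu : {finite_measure set Rd R d -> \bar R}} {r : R} :
    measure_vector_field V -> V1 V -> (forall x, msupp mu x -> `|x| <= r) ->
  exists B : R, forall p, msupp (V mu) p -> `|p.2| <= B.
Proof.
move=> mvf [CS [CS0 HV1]] supp_r.
have supp1 q : msupp (V mu) q -> enorm q.1 <= Num.sqrt d%:R * r.
  move=> /(measure_vector_field_msupp_fst mvf) /supp_r qr.
  by apply: le_trans (enorm_le_norm _) _; rewrite ler_wpM2l ?sqrtr_ge0.
exists (CS * (1 + Num.sqrt d%:R * r)) => p Vp.
apply: le_trans (norm_le_enorm _) _; rewrite -lee_fin.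
apply: le_trans (ereal_sup_ubound _) (le_trans (HV1 mu) _); first by exists p.
rewrite EFinM EFinD; apply: lee_wpmul2l; first by rewrite lee_fin ltW.
apply: leeD => //; apply: ge_ereal_sup => _ [q Vq <-].
by rewrite lee_fin; exact: supp1.
Qed.

Theorem proposition4p1 (R : realType) (d : nat)
  (mu : {finite_measure set (Rd R d) -> \bar R})
  (V : {finite_measure set (Rd R d) -> \bar R} ->
       {finite_measure set (Rd2 R d) -> \bar R}) :
  compact (msupp mu : set 'rV[R]_d) ->
  measure_vector_field V -> V1 V ->
  exists N0 : nat, forall N : nat, (N0 <= N)%N ->
    (bl_dist (@eucl_dist R d) mu (AX N mu)
       <= (Num.sqrt (d%:R) * Delta R N ^+ 2)%:E * bl_norm (@eucl_dist R d) mu)%E /\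
    (bl_dist (@eucl_dist2 R d) (V mu) (AV N (V mu))
       <= (2 * Num.sqrt (d%:R) * Delta R N)%:E * bl_norm (@eucl_dist R d) mu)%E.
Proof.
move=> supp_compact mvf hV1.
have [r supp_r] : exists r : R, forall x, msupp mu x -> `|x| <= r.
  have [M [_ HM]] := compact_bounded supp_compact.
  by exists (`|M| + 1) => x /HM; apply; exact: lt_le_trans (ltr_pwDr _ (ler_norm _)) _.
have [r' supp_r'] := V1_msupp_snd_bounded mvf hV1 supp_r.
pose B := Num.max r r' + 1.
have ltB x : x <= Num.max r r' -> x < B by move=> xr; rewrite (le_lt_trans xr) ?ltrDl.
exists (Num.truncn B).+1 => N BN; have N0 : (0 < N)%N by exact: leq_trans BN.
have {}BN : B <= N%:R by apply: ltW; apply: lt_le_trans (truncnS_gt _) _; rewrite ler_nat.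
have mass : (mu setT <= bl_norm (@eucl_dist R d) mu)%E.
  by apply: measure_setT_le_bl_norm => x y; exact: sqrtr_ge0.
split.
- apply: le_trans (bl_dist_AX_le N0 BN _) _.
    apply: msupp_norm_lt_null => [n|]; first exact: compact_norm_le_rV.
    by move=> x /supp_r xr; rewrite ltB // le_max xr.
  by rewrite lee_wpmul2l // lee_fin ?mulr_ge0 ?sqrtr_ge0 ?sqr_ge0 ?invr_ge0.
- apply: le_trans (bl_dist_AV_le N0 BN _) _.
    apply: msupp_norm_lt_null => [n|]; first exact: compact_norm_le_rV2.
    move=> p Vp; have /supp_r p1r := measure_vector_field_msupp_fst mvf Vp.
    by rewrite [`|p|]/Num.norm /= gt_max !ltB // le_max ?p1r ?supp_r' ?orbT.
  have VT : V mu setT = mu setT by rewrite -(mvf mu setT measurableT) preimage_setT.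
  by rewrite VT lee_wpmul2l // lee_fin !mulr_ge0 ?sqrtr_ge0 ?invr_ge0.
Qed.
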